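(* Let $p_0=1$, $p_1=1$, $p_2=2$ and $p_n=2p_{n-1}+p_{n-2}$ for $n\ge 3$. Then $|S_n(123,2143,3214)|=p_n$ for all $n\ge0$; equivalently $$\sum_{n\ge0}|S_n(123,2143,3214)|\,x^n=\frac{1-x-x^2}{1-2x-x^2}.$$ *)

From mathcomp Require Import all_boot all_order all_fingroup.
Set Implicit Arguments. Unset Strict Implicit. Unset Printing Implicit Defensive.

(* A pattern is given as a word, e.g. [:: 1; 2; 3] for 123.
   A permutation s of {0,...,n-1} (written in one-line notation
   s 0, s 1, ..., s (n-1)) contains the pattern q if there are indices
   f 0 < f 1 < ... < f (k-1) (k = size q) such that the subsequence
   s (f 0), ..., s (f (k-1)) is order-isomorphic to q. *)
Definition contains_pattern (n : nat) (s : 'S_n) (q : seq nat) : bool :=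
  [exists f : {ffun 'I_(size q) -> 'I_n},
     [forall a : 'I_(size q), forall b : 'I_(size q),
        ((a < b)%N ==> (f a < f b)%N) &&
        ((s (f a) < s (f b))%N == (nth 0 q a < nth 0 q b)%N)]].

Definition avoids (n : nat) (s : 'S_n) (q : seq nat) : bool :=
  ~~ contains_pattern s q.

Definition S_123_2143_3214 (n : nat) : {set 'S_n} :=
  [set s : 'S_n | [&& avoids s [:: 1; 2; 3],
                      avoids s [:: 2; 1; 4; 3] & avoids s [:: 3; 2; 1; 4]]].

Fixpoint pseq (n : nat) : nat :=
  match n with
  | 0 => 1
  | S n1 =>
    match n1 with
    | 0 => 1
    | S n2 =>
      match n2 with
      | 0 => 2
      | S _ => 2 * pseq n1 + pseq n2
      end
    end
  end.

Example pseq_test : map pseq (iota 0 6) = [:: 1; 1; 2; 5; 12; 29]. Proof. by []. Qed.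

From mathcomp Require Import all_boot all_order all_fingroup zify.
Set Implicit Arguments. Unset Strict Implicit. Unset Printing Implicit Defensive.

(* The maximum n+1 of a permutation avoiding 123, 2143 and 3214 stands in one of
   its first three positions: after three smaller entries x, y, z it would
   complete a 123 (if x < y or y < z) or a 3214. If it stands third, the two
   entries before it decrease (no 123) and the first one is n (otherwise
   x y (n+1) n is a 2143). Conversely, putting a new maximum first or second in
   an avoider, or turning an avoider y t of length n into n y (n+1) t, creates
   none of the patterns. Hence p_(n+2) = 2 p_(n+1) + p_n. Permutations are
   handled through their one-line notation, where occurrences of patterns are
   subsequences. *)

Lemma mem_perm_iota l n : perm_eq l (iota 0 n) -> forall v, (v \in l) = (v < n).
Proof. by move=> /perm_mem eq_l v; rewrite eq_l mem_iota. Qed.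

Lemma perm_iota_cons n t : perm_eq (n :: t) (iota 0 n.+1) = perm_eq t (iota 0 n).
Proof. by rewrite -addn1 iotaD add0n perm_sym perm_catC /= perm_cons perm_sym. Qed.

Lemma perm_iota_ins_second n x t :
  perm_eq [:: x, n & t] (iota 0 n.+1) = perm_eq (x :: t) (iota 0 n).
Proof. by rewrite (perm_catCA [:: x] [:: n] t) perm_iota_cons. Qed.

Lemma perm_iota_ins_third n y t :
  perm_eq [:: n, y, n.+1 & t] (iota 0 n.+2) = perm_eq (y :: t) (iota 0 n).
Proof. by rewrite (perm_catCA [:: n; y] [:: n.+1] t) !perm_iota_cons. Qed.

Lemma cons_subseq_cons (T : eqType) (a x : T) s l :
  subseq (a :: s) (x :: l) = if a == x then subseq s l else subseq (a :: s) l.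
Proof. by rewrite /=; case: (a == x). Qed.

Lemma subseq_behead (T : eqType) (b x : T) s l : subseq (b :: s) (x :: l) -> subseq s l.
Proof. by rewrite cons_subseq_cons; case: eqP => // _ /cons_subseq. Qed.

Lemma subseq_map_preim (T U : eqType) (f : T -> U) (w : seq U) (l : seq T) :
  subseq w (map f l) -> exists2 u, subseq u l & w = map f u.
Proof.
move=> /subseqP[m sz_m ->]; rewrite size_map in sz_m.
by exists (mask m l); rewrite ?mask_subseq // map_mask.
Qed.

Lemma relpre_ltn_trans n : transitive (relpre (val : 'I_n -> nat) ltn).
Proof. by move=> j i k; apply: ltn_trans. Qed.

Lemma sorted_enum_ord n : sorted (relpre val ltn) (enum 'I_n).
Proof. by rewrite -sorted_map val_enum_ord iota_ltn_sorted. Qed.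

Lemma sorted_subseq_enum_ord n (u : seq 'I_n) :
  sorted (relpre val ltn) u -> subseq u (enum 'I_n).
Proof.
move=> sorted_u.
suff -> : u = filter (mem u) (enum 'I_n) by apply: filter_subseq.
apply: (irr_sorted_eq (@relpre_ltn_trans n)) => //.
- by move=> i; rewrite /= ltnn.
- apply: sorted_filter; [exact: relpre_ltn_trans | exact: sorted_enum_ord].
- by move=> i; rewrite mem_filter mem_enum andbT.
Qed.

Definition oneline n (s : 'S_n) : seq nat := [seq val (s i) | i <- enum 'I_n].

Lemma nth_oneline n (s : 'S_n) (i : 'I_n) : nth 0 (oneline s) i = s i.
Proof. by rewrite (nth_map i) ?size_enum_ord // nth_ord_enum. Qed.

Lemma oneline_inj n : injective (@oneline n).
Proof.
by move=> s s' eq_s; apply/permP => i; apply/val_inj; rewrite /= -!nth_oneline eq_s.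
Qed.

Lemma perm_oneline n (s : 'S_n) : perm_eq (oneline s) (iota 0 n).
Proof.
have uniq_s : uniq (oneline s).
  by rewrite map_inj_uniq ?enum_uniq // => i j /val_inj/perm_inj.
apply: uniq_perm; rewrite ?iota_uniq // => v; rewrite mem_iota add0n.
apply/mapP/idP => [[i _ ->] | lt_v]; first exact: ltn_ord.
by exists (s^-1 (Ordinal lt_v))%g; rewrite ?mem_enum ?permKV.
Qed.

Lemma oneline_onto n l : perm_eq l (iota 0 n) -> exists s : 'S_n, oneline s = l.
Proof.
move=> perm_l; have size_l : size l = n by rewrite (perm_size perm_l) size_iota.
have lt_l (i : 'I_n) : nth 0 l i < n.
  by rewrite -(mem_perm_iota perm_l) mem_nth ?size_l.
have inj_l : injective (fun i : 'I_n => Ordinal (lt_l i)).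
  move=> i j [] /eqP; rewrite nth_uniq ?size_l // => [/eqP/val_inj //|].
  by rewrite (perm_uniq perm_l) iota_uniq.
exists (perm inj_l); apply: (@eq_from_nth _ 0); first by rewrite size_map size_enum_ord.
move=> i; rewrite size_map size_enum_ord => lt_i.
by rewrite -[i]/(val (Ordinal lt_i)) nth_oneline permE.
Qed.

Definition order_iso (w q : seq nat) :=
  size w = size q /\
  forall a b : 'I_(size q), (nth 0 w a < nth 0 w b) = (nth 0 q a < nth 0 q b).

Definition seq_contains (l q : seq nat) := exists2 w, subseq w l & order_iso w q.

Lemma contains_patternE n (s : 'S_n) q :
  contains_pattern s q <-> seq_contains (oneline s) q.
Proof.
split.
  move=> /existsP[f /forallP f_occ].
  have {}f_occ (a b : 'I_(size q)) : ((a < b) ==> (f a < f b)) &&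
      ((s (f a) < s (f b)) == (nth 0 q a < nth 0 q b)).
    exact: (forallP (f_occ a)).
  exists [seq val (s (f a)) | a <- enum 'I_(size q)].
    rewrite (map_comp (fun i => val (s i)) f) map_subseq //.
    apply: sorted_subseq_enum_ord; rewrite sorted_map.
    apply: sub_sorted (sorted_enum_ord _) => a b lt_ab.
    by have /andP[/implyP/(_ lt_ab)] := f_occ a b.
  split; first by rewrite size_map size_enum_ord.
  move=> a b; rewrite (nth_map a) ?size_enum_ord // nth_ord_enum.
  rewrite (nth_map a) ?size_enum_ord // nth_ord_enum.
  by have /andP[_ /eqP] := f_occ a b.
move=> [w /subseq_map_preim[u sub_u ->{w}] [sz_u iso_u]].
rewrite size_map in sz_u.
have sorted_u : sorted (relpre val ltn) u.
  by apply: subseq_sorted sub_u _; [exact: relpre_ltn_trans | exact: sorted_enum_ord].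
pose f := [ffun a => tnth (in_tuple u) (cast_ord (esym sz_u) a)].
have fE a x0 : f a = nth x0 u a by rewrite ffunE (tnth_nth x0).
apply/existsP; exists f; apply/forallP => a; apply/forallP => b.
apply/andP; split.
  apply/implyP => lt_ab; rewrite (fE a (f a)) (fE b (f a)).
  by apply: (sorted_ltn_nth (@relpre_ltn_trans n) _ sorted_u); rewrite ?inE ?sz_u.
by rewrite -iso_u !(nth_map (f a)) ?sz_u // -!fE.
Qed.

Definition has123 (l : seq nat) :=
  exists a b c, subseq [:: a; b; c] l /\ a < b < c.
Definition has2143 (l : seq nat) :=
  exists a b c d, subseq [:: a; b; c; d] l /\ [/\ b < a, a < d & d < c].
Definition has3214 (l : seq nat) :=
  exists a b c d, subseq [:: a; b; c; d] l /\ [/\ c < b, b < a & a < d].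

Lemma seq_contains123 l : seq_contains l [:: 1; 2; 3] <-> has123 l.
Proof.
split.
  move=> [w sub_l [sz_w iso_l]].
  case: w sz_w sub_l iso_l => [|a [|b [|c [|? ?]]]] // _ sub_l iso_l.
  have := iso_l (@Ordinal 3 0 isT) (@Ordinal 3 1 isT).
  have := iso_l (@Ordinal 3 1 isT) (@Ordinal 3 2 isT).
  by move=> /= lt_bc lt_ab; exists a, b, c; rewrite lt_ab lt_bc.
move=> [a [b [c [sub_l /andP[lt_ab lt_bc]]]]]; exists [:: a; b; c] => //; split=> //.
by case=> [[|[|[|?]]] ?] [[|[|[|?]]] ?] //=; lia.
Qed.

Lemma seq_contains2143 l : seq_contains l [:: 2; 1; 4; 3] <-> has2143 l.
Proof.
split.
  move=> [w sub_l [sz_w iso_l]].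
  case: w sz_w sub_l iso_l => [|a [|b [|c [|d [|? ?]]]]] // _ sub_l iso_l.
  have := iso_l (@Ordinal 4 1 isT) (@Ordinal 4 0 isT).
  have := iso_l (@Ordinal 4 0 isT) (@Ordinal 4 3 isT).
  have := iso_l (@Ordinal 4 3 isT) (@Ordinal 4 2 isT).
  by move=> /= lt_dc lt_ad lt_ba; exists a, b, c, d; rewrite lt_ba lt_ad lt_dc.
move=> [a [b [c [d [sub_l [lt_ba lt_ad lt_dc]]]]]].
exists [:: a; b; c; d] => //; split=> //.
by case=> [[|[|[|[|?]]]] ?] [[|[|[|[|?]]]] ?] //=; lia.
Qed.

Lemma seq_contains3214 l : seq_contains l [:: 3; 2; 1; 4] <-> has3214 l.
Proof.
split.
  move=> [w sub_l [sz_w iso_l]].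
  case: w sz_w sub_l iso_l => [|a [|b [|c [|d [|? ?]]]]] // _ sub_l iso_l.
  have := iso_l (@Ordinal 4 2 isT) (@Ordinal 4 1 isT).
  have := iso_l (@Ordinal 4 1 isT) (@Ordinal 4 0 isT).
  have := iso_l (@Ordinal 4 0 isT) (@Ordinal 4 3 isT).
  by move=> /= lt_ad lt_ba lt_cb; exists a, b, c, d; rewrite lt_cb lt_ba lt_ad.
move=> [a [b [c [d [sub_l [lt_cb lt_ba lt_ad]]]]]].
exists [:: a; b; c; d] => //; split=> //.
by case=> [[|[|[|[|?]]]] ?] [[|[|[|[|?]]]] ?] //=; lia.
Qed.

Definition avoider (l : seq nat) := [/\ ~ has123 l, ~ has2143 l & ~ has3214 l].

Lemma mem_S_123_2143_3214 n (s : 'S_n) :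
  s \in S_123_2143_3214 n <-> avoider (oneline s).
Proof.
rewrite inE /avoids; split.
  move=> /and3P[/negP no123 /negP no2143 /negP no3214].
  by split=> [/seq_contains123 | /seq_contains2143 | /seq_contains3214]
    /contains_patternE.
move=> [no123 no2143 no3214]; apply/and3P.
by split; apply/negP=> /contains_patternE;
  [move/seq_contains123 | move/seq_contains2143 | move/seq_contains3214].
Qed.

Lemma avoider_subseq l' l : subseq l' l -> avoider l -> avoider l'.
Proof.
move=> sub_l [no123 no2143 no3214]; split.
- by move=> [a [b [c [/subseq_trans/(_ sub_l) occ ord]]]]; apply: no123; exists a, b, c.
- move=> [a [b [c [d [/subseq_trans/(_ sub_l) occ ord]]]]].
  by apply: no2143; exists a, b, c, d.
- move=> [a [b [c [d [/subseq_trans/(_ sub_l) occ ord]]]]].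
  by apply: no3214; exists a, b, c, d.
Qed.

Lemma avoider_small l : size l < 3 -> avoider l.
Proof.
move=> small_l; split.
- by move=> [a [b [c [/size_subseq/= ? _]]]]; lia.
- by move=> [a [b [c [d [/size_subseq/= ? _]]]]]; lia.
- by move=> [a [b [c [d [/size_subseq/= ? _]]]]]; lia.
Qed.

Lemma subseq_drop_max (a : nat) w M t : {in t, forall y, y < M} ->
  (exists2 z, z \in w & a < z) -> subseq (a :: w) (M :: t) -> subseq (a :: w) t.
Proof.
move=> t_lt_M [z w_z lt_az] /=; case: eqP => // eq_aM sub_t.
by have := t_lt_M z (mem_subseq sub_t w_z); lia.
Qed.

Lemma subseq_drop_second_max a b w x M t : {in t, forall y, y < M} ->
  (exists2 z, z \in w & (a < z) && (b < z)) ->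
  subseq [:: a, b & w] [:: x, M & t] -> subseq [:: a, b & w] (x :: t).
Proof.
move=> t_lt_M [z w_z /andP[lt_az lt_bz]] /=; case: eqP => _.
  by apply: subseq_drop_max => //; exists z.
by apply: subseq_drop_max => //; exists z; rewrite // inE w_z orbT.
Qed.

Lemma avoider_cons_max M t : {in t, forall y, y < M} -> avoider t -> avoider (M :: t).
Proof.
move=> t_lt_M [no123 no2143 no3214]; split.
- move=> [a [b [c [occ /andP[lt_ab lt_bc]]]]]; apply: no123; exists a, b, c.
  by rewrite (subseq_drop_max t_lt_M _ occ) ?lt_ab //; exists b; rewrite ?inE ?eqxx.
- move=> [a [b [c [d [occ [lt_ba lt_ad lt_dc]]]]]]; apply: no2143; exists a, b, c, d.
  split=> //; apply: subseq_drop_max t_lt_M _ occ.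
  by exists d; rewrite ?inE ?eqxx ?orbT.
- move=> [a [b [c [d [occ [lt_cb lt_ba lt_ad]]]]]]; apply: no3214; exists a, b, c, d.
  split=> //; apply: subseq_drop_max t_lt_M _ occ.
  by exists d; rewrite ?inE ?eqxx ?orbT.
Qed.

Lemma avoider_ins_second_max x M t : {in t, forall y, y < M} ->
  avoider (x :: t) -> avoider [:: x, M & t].
Proof.
move=> t_lt_M [no123 no2143 no3214]; split.
- move=> [a [b [c [occ /andP[lt_ab lt_bc]]]]]; apply: no123; exists a, b, c.
  rewrite (subseq_drop_second_max t_lt_M _ occ) ?lt_ab //.
  by exists c; rewrite ?inE ?eqxx // lt_bc (ltn_trans lt_ab).
- move=> [a [b [c [d [occ [lt_ba lt_ad lt_dc]]]]]]; apply: no2143; exists a, b, c, d.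
  split=> //; apply: subseq_drop_second_max t_lt_M _ occ.
  by exists d; rewrite ?inE ?eqxx ?orbT // lt_ad (ltn_trans lt_ba).
- move=> [a [b [c [d [occ [lt_cb lt_ba lt_ad]]]]]]; apply: no3214; exists a, b, c, d.
  split=> //; apply: subseq_drop_second_max t_lt_M _ occ.
  by exists d; rewrite ?inE ?eqxx ?orbT // lt_ad (ltn_trans lt_ba).
Qed.

Lemma count_gt_subseq N y M t w : y < N -> {in t, forall z, z < N} ->
  subseq w [:: y, M & t] -> count (fun z => N < z) w <= 1.
Proof.
move=> lt_yN t_lt_N /(leq_count_subseq (fun z => N < z)) /leq_trans; apply.
have count_t : count (fun z => N < z) t = 0.
  by apply/eqP; rewrite -leqn0 leqNgt -has_count; apply/hasPn => z /t_lt_N; lia.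
by rewrite /= count_t; lia.
Qed.

Lemma avoider_ins_third_max N y M t : y < N -> N < M -> {in t, forall z, z < N} ->
  avoider (y :: t) -> avoider [:: N, y, M & t].
Proof.
move=> lt_yN lt_NM t_lt_N av_yt.
have t_lt_M : {in t, forall z, z < M} by move=> z /t_lt_N/ltn_trans; apply.
have [no123 no2143 no3214] := avoider_ins_second_max t_lt_M av_yt.
(* An occurrence starting at N needs two later entries above N, or one above N
   preceded by two others; only M lies above N, and only y precedes it. *)
split.
- move=> [a [b [c [occ /andP[lt_ab lt_bc]]]]].
  rewrite cons_subseq_cons in occ; case: eqP occ => [eq_aN | _] occ.
    have := count_gt_subseq lt_yN t_lt_N occ.
    by rewrite /= -eq_aN lt_ab (ltn_trans lt_ab lt_bc).
  by apply: no123; exists a, b, c; rewrite lt_ab.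
- move=> [a [b [c [d [occ [lt_ba lt_ad lt_dc]]]]]].
  rewrite cons_subseq_cons in occ; case: eqP occ => [eq_aN | _] occ.
    have := count_gt_subseq lt_yN t_lt_N (cons_subseq occ).
    by rewrite /= -eq_aN lt_ad (ltn_trans lt_ad lt_dc).
  by apply: no2143; exists a, b, c, d.
- move=> [a [b [c [d [occ [lt_cb lt_ba lt_ad]]]]]].
  rewrite cons_subseq_cons in occ; case: eqP occ => [eq_aN | _] occ.
    move: occ => /subseq_behead/subseq_behead; rewrite sub1seq => /t_lt_N.
    by rewrite ltnNge -eq_aN ltnW.
  by apply: no3214; exists a, b, c, d.
Qed.

Lemma avoider_max_early x y z t M : avoider [:: x, y, z & t] -> x != y -> y != z ->
  x < M -> y < M -> z < M -> M \notin t.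
Proof.
move=> [no123 _ no3214] neq_xy neq_yz lt_xM lt_yM lt_zM; apply/negP => t_M.
have occ_M s : subseq s [:: x; y; z] -> subseq (rcons s M) [:: x, y, z & t].
  by move=> sub_s; rewrite -cats1 -[_ :: _ :: _]/([:: x; y; z] ++ t) cat_subseq ?sub1seq.
case: (ltngtP x y) => [lt_xy | lt_yx | eq_xy]; last by rewrite eq_xy eqxx in neq_xy.
  apply: no123; exists x, y, M; rewrite lt_xy lt_yM (occ_M [:: x; y]) //.
  exact: (prefix_subseq [:: x; y] [:: z]).
case: (ltngtP y z) => [lt_yz | lt_zy | eq_yz]; last by rewrite eq_yz eqxx in neq_yz.
  apply: no123; exists y, z, M; rewrite lt_yz lt_zM (occ_M [:: y; z]) //.
  exact: (suffix_subseq [:: x] [:: y; z]).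
by apply: no3214; exists x, y, z, M; rewrite (occ_M [:: x; y; z]).
Qed.

Lemma avoider_max_third x y M t : avoider [:: x, y, M & t] -> x != y -> y < M ->
  y < x /\ {in t, forall v, x < v -> M <= v}.
Proof.
move=> [no123 no2143 _] neq_xy lt_yM.
have lt_yx : y < x.
  rewrite ltn_neqAle eq_sym neq_xy leqNgt; apply/negP => lt_xy.
  by apply: no123; exists x, y, M; rewrite /= !eqxx sub0seq lt_xy lt_yM.
split=> // v t_v lt_xv; rewrite leqNgt; apply/negP => lt_vM.
by apply: no2143; exists x, y, M, v; rewrite /= !eqxx sub1seq t_v.
Qed.

Lemma avoider_max_position n l : perm_eq l (iota 0 n.+2) -> avoider l ->
  [\/ exists t, l = n.+1 :: t,
      exists x t, l = [:: x, n.+1 & t] |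
      exists y t, l = [:: n, y, n.+1 & t]].
Proof.
move=> perm_l av_l.
have uniq_l : uniq l by rewrite (perm_uniq perm_l) iota_uniq.
have lt_max v : v \in l -> v != n.+1 -> v < n.+1.
  by rewrite (mem_perm_iota perm_l) ltnS leq_eqVlt => /orP[->|].
have l_max : n.+1 \in l by rewrite (mem_perm_iota perm_l).
have l_n : n \in l by rewrite (mem_perm_iota perm_l).
case: l => [|x [|y [|z t]]] in perm_l av_l uniq_l lt_max l_max l_n *.
- by [].
- by constructor 1; exists [::]; move: l_max; rewrite inE => /eqP <-.
- move: l_max; rewrite !inE => /orP[] /eqP <-.
    by constructor 1; exists [:: y].
  by constructor 2; exists x, [::].
have [<- | neq_xM] := eqVneq x n.+1; first by constructor 1; exists [:: y, z & t].
have [<- | neq_yM] := eqVneq y n.+1; first by constructor 2; exists x, (z :: t).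
have lt_xM := lt_max x (mem_head _ _) neq_xM.
have lt_yM : y < n.+1 by apply: lt_max neq_yM; rewrite !inE eqxx orbT.
move: uniq_l => /= /and4P[]; rewrite !inE !negb_or.
move=> /and3P[neq_xy _ _] /andP[neq_yz _] _ _.
have eq_zM : z = n.+1.
  apply/eqP; apply: contraTT l_max => neq_zM.
  have lt_zM : z < n.+1 by apply: lt_max neq_zM; rewrite !inE eqxx !orbT.
  have := avoider_max_early av_l neq_xy neq_yz lt_xM lt_yM lt_zM.
  by rewrite !inE !(eq_sym n.+1) (negbTE neq_xM) (negbTE neq_yM) (negbTE neq_zM).
subst z; have [lt_yx gap_t] := avoider_max_third av_l neq_xy lt_yM.
constructor 3; exists y, t; congr (_ :: _).
apply/eqP; rewrite eqn_leq -ltnS lt_xM leqNgt; apply/negP => lt_xn.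
have t_n : n \in t.
  by move: l_n; rewrite !inE (gtn_eqF lt_xn) (gtn_eqF (ltn_trans lt_yx lt_xn)) ltn_eqF.
by have := gap_t n t_n lt_xn; rewrite ltnn.
Qed.

Definition ins_second (M : nat) (t : seq nat) :=
  if t is x :: t' then [:: x, M & t'] else [::].
Definition ins_third (N M : nat) (t : seq nat) :=
  if t is y :: t' then [:: N, y, M & t'] else [::].

Fixpoint avoiders (n : nat) : seq (seq nat) :=
  match n with
  | 0 => [:: [::]]
  | 1 => [:: [:: 0]]
  | S ((S k) as m) =>
      [seq m :: t | t <- avoiders m] ++ [seq ins_second m t | t <- avoiders m] ++
      (* for k = 0 this block would contain the junk list ins_third 0 1 [::] *)
      if k is 0 then [::] else [seq ins_third k m t | t <- avoiders k]
  end.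

Lemma avoidersSS k : avoiders k.+2 =
  [seq k.+1 :: t | t <- avoiders k.+1] ++ [seq ins_second k.+1 t | t <- avoiders k.+1] ++
  if k is 0 then [::] else [seq ins_third k k.+1 t | t <- avoiders k].
Proof. by []. Qed.

Lemma size_avoiders n : size (avoiders n) = pseq n.
Proof.
elim/ltn_ind: n => [[|[|[|k]]]] IH //.
by rewrite avoidersSS !size_cat !size_map !IH // addnA addnn -mul2n.
Qed.

Lemma avoiders_sound n l : l \in avoiders n -> perm_eq l (iota 0 n) /\ avoider l.
Proof.
elim/ltn_ind: n l => -[|[|k]] IH l.
- by rewrite inE => /eqP ->; split; last exact: avoider_small.
- by rewrite inE => /eqP ->; split; last exact: avoider_small.
rewrite avoidersSS !mem_cat => /or3P[||].
- move=> /mapP[t /IH[] // perm_t av_t ->].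
  split; first by rewrite perm_iota_cons.
  by apply: avoider_cons_max => // v; rewrite (mem_perm_iota perm_t).
- move=> /mapP[[|x t] /IH[] // perm_t av_t ->].
  split; first by rewrite perm_iota_ins_second.
  apply: avoider_ins_second_max av_t => v t_v.
  by rewrite -(mem_perm_iota perm_t) inE t_v orbT.
case: k IH => // k IH /mapP[[|y t] /IH[] // perm_t av_t ->].
split; first by rewrite perm_iota_ins_third.
have t_lt v : v \in t -> v < k.+1.
  by move=> t_v; rewrite -(mem_perm_iota perm_t) inE t_v orbT.
apply: avoider_ins_third_max av_t => //.
by rewrite -(mem_perm_iota perm_t) mem_head.
Qed.

Lemma avoiders_complete n l : perm_eq l (iota 0 n) -> avoider l -> l \in avoiders n.
Proof.
elim/ltn_ind: n l => -[|[|k]] IH l perm_l av_l.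
- by rewrite (perm_small_eq _ perm_l) ?mem_head.
- by rewrite (perm_small_eq _ perm_l) ?mem_head.
rewrite avoidersSS !mem_cat.
have [[t eq_l] | [x [t eq_l]] | [y [t eq_l]]] := avoider_max_position perm_l av_l;
  subst l.
- apply/or3P/Or31/map_f; apply: IH => //; first by rewrite -perm_iota_cons.
  exact: avoider_subseq (subseq_cons t _) av_l.
- apply/or3P/Or32; apply/mapP; exists (x :: t) => //.
  apply: IH => //; first by rewrite -perm_iota_ins_second.
  by apply: avoider_subseq av_l; rewrite cons_subseq_cons eqxx subseq_cons.
case: k IH perm_l av_l => [|k] IH perm_l av_l; first by have := perm_size perm_l.
apply/or3P/Or33; apply/mapP; exists (y :: t) => //.
apply: IH => //; first by rewrite -perm_iota_ins_third.
apply: avoider_subseq av_l; apply: subseq_trans (subseq_cons _ k.+1).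
by rewrite cons_subseq_cons eqxx subseq_cons.
Qed.

Lemma ins_second_inj M : injective (ins_second M).
Proof. by move=> [|x t] [|x' t'] //= [-> ->]. Qed.

Lemma ins_third_inj N M : injective (ins_third N M).
Proof. by move=> [|y t] [|y' t'] //= [-> ->]. Qed.

Lemma uniq_avoiders n : uniq (avoiders n).
Proof.
elim/ltn_ind: n => -[|[|k]] IH //.
have avoiders_cons m t : t \in avoiders m.+1 -> exists x t', t = x :: t' /\ x < m.+1.
  case: t => [|x t] /avoiders_sound[perm_t _]; first by move: (perm_size perm_t).
  by exists x, t; rewrite -(mem_perm_iota perm_t) mem_head.
rewrite avoidersSS.
set G1 := [seq _ | _ <- _]; set G2 := [seq _ | _ <- _]; set G3 := if k is 0 then _ else _.
have G1_head l : l \in G1 -> head 0 l = k.+1 by move=> /mapP[t _ ->].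
have G2_head l : l \in G2 -> head 0 l < k.+1 /\ nth 0 l 1 = k.+1.
  by move=> /mapP[t /avoiders_cons[x [t' [-> lt_x]]] ->].
have G3_head l : l \in G3 -> head 0 l < k.+1 /\ nth 0 l 1 < k.+1.
  rewrite /G3; case: k {IH G1 G2 G1_head G2_head G3} => //= k.
  move=> /mapP[t /avoiders_cons[y [t' [-> lt_y]]] ->].
  by split=> //; apply: ltnW.
have uniq_G3 : uniq G3.
  rewrite /G3; case: k {G1 G2 G1_head G2_head G3 G3_head} IH => // k IH.
  by rewrite map_inj_uniq ?IH //; apply: ins_third_inj.
rewrite !cat_uniq uniq_G3 !map_inj_uniq ?IH //=; last 2 first.
- exact: ins_second_inj.
- by move=> t t' [].
rewrite andbT; apply/andP; split; apply/hasPn => l.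
  rewrite mem_cat => /orP[/G2_head | /G3_head] [lt_l _]; apply/negP => /G1_head; lia.
by move=> /G3_head[_ lt_l]; apply/negP => /G2_head[_]; lia.
Qed.

Theorem mainTheorem6 (n : nat) : #|S_123_2143_3214 n| = pseq n.
Proof.
rewrite -size_avoiders cardE -(size_map (@oneline n)).
apply/perm_size/uniq_perm => [|| l].
- by rewrite map_inj_uniq ?enum_uniq //; apply: oneline_inj.
- exact: uniq_avoiders.
apply/mapP/idP => [[s] | /avoiders_sound[perm_l av_l]].
  rewrite mem_enum => /mem_S_123_2143_3214 av_s ->.
  exact: avoiders_complete (perm_oneline s) av_s.
have [s eq_l] := oneline_onto perm_l.
by exists s; rewrite // mem_enum; apply/mem_S_123_2143_3214; rewrite eq_l.
Qed.
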